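(* For every $n\ge1$ there is a bijection $S\mapsto M$ from the set of signatures in $[2n]$ onto the set of Motzkin paths of length $n$ such that the weight of $S$, namely $\big(\prod_{i=1}^{2n}s(i)\big)t^{|S|/2}$, equals the weight $\rho(M)$ of $M$, where $\rho(M)$ is the product of its step weights: an up step at height $h\ge0$ has weight $(h+1)(h+2)t$, a level step at height $h\ge0$ has weight $(h+1)^2$, and a down step at height $h\ge1$ has weight $(h+1)h$.
   Context: A signature in $[2n]$ is a set $S\subseteq[2n]$ such that: (i) $S$ has $k$ odd and $k$ even elements for some $k\ge0$; (ii) for each $j\in[n]$ at most one of $2j-1,2j$ lies in $S$; (iii) for every $i\in[2n]$, $S\cap\{1,\dots,i\}$ has at least as many odd as even elements. With $f(i)$ (resp. $g(i)$) the number of odd (resp. even) elements of $S$ less than $i$, its vector is $s(i)=f(i)-g(i)$ if $i\in S$ is even, and $s(i)=f(i)-g(i)+1$ otherwise. A Motzkin path of length $n$ is a lattice path from $(0,0)$ to $(n,0)$ staying weakly above the $x$-axis with steps up $(1,1)$, down $(1,-1)$ and level $(1,0)$; the height of a step is the $y$-coordinate of its starting point. *)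

From HB Require Import structures.
From mathcomp Require Import all_boot all_order all_algebra.
Set Implicit Arguments. Unset Strict Implicit. Unset Printing Implicit Defensive.
Import GRing.Theory.

(* Convention: a subset S of [2n] = {1,...,2n} is represented as
   S : {set 'I_(2*n)}, the ordinal i standing for the integer i+1.
   Hence "i represents an odd element" is  odd i.+1. *)

Section Signatures.
Variable n : nat.
Implicit Types (S : {set 'I_(2 * n)}).

Definition inS S (m : nat) : bool := [exists i in S, i.+1 == m].

Definition is_signature S : bool :=
  [&& #|[set i in S | odd i.+1]| == #|[set i in S | ~~ odd i.+1]|,
      [forall j : 'I_n, ~~ (inS S (j.*2.+1) && inS S (j.*2.+2))] &
      [forall i : 'I_(2 * n),
         #|[set m in S | (m <= i) && ~~ odd m.+1]|
           <= #|[set m in S | (m <= i) && odd m.+1]|]].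

Definition sig_f S (i : 'I_(2 * n)) : nat := #|[set m in S | (m < i) && odd m.+1]|.
Definition sig_g S (i : 'I_(2 * n)) : nat := #|[set m in S | (m < i) && ~~ odd m.+1]|.

Local Open Scope ring_scope.
Definition sig_vec S (i : 'I_(2 * n)) : int :=
  if (i \in S) && ~~ odd i.+1 then (sig_f S i)%:Z - (sig_g S i)%:Z
  else (sig_f S i)%:Z - (sig_g S i)%:Z + 1.

(* weight of S: (prod_i s(i)) t^{|S|/2}, as a polynomial in t = 'X *)
Definition sig_weight S : {poly int} :=
  (\prod_(i < 2 * n) sig_vec S i)%:P * 'X^(#|S| %/ 2)%N.

End Signatures.

Inductive step := Up | Level | Down.

Definition step_eqb (a b : step) : bool :=
  match a, b with Up, Up | Level, Level | Down, Down => true | _, _ => false end.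
Lemma step_eqP : Equality.axiom step_eqb.
Proof. by case; case; constructor. Qed.
HB.instance Definition _ := hasDecEq.Build step step_eqP.

Fixpoint motz_ok (h : nat) (s : seq step) : bool :=
  match s with
  | [::] => h == 0
  | Up :: s' => motz_ok h.+1 s'
  | Level :: s' => motz_ok h s'
  | Down :: s' => (0 < h) && motz_ok h.-1 s'
  end.

Definition is_motzkin (n : nat) (M : seq step) : bool :=
  (size M == n) && motz_ok 0 M.

Local Open Scope ring_scope.
(* product of step weights; h is the height of the starting point of the step *)
Fixpoint motz_weight_from (h : nat) (s : seq step) : {poly int} :=
  match s with
  | [::] => 1
  | Up :: s' => (((h.+1 * h.+2)%N)%:R *: 'X) * motz_weight_from h.+1 s'
  | Level :: s' => ((h.+1 ^ 2)%N)%:R%:P * motz_weight_from h s'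
  | Down :: s' => ((h.+1 * h)%N)%:R%:P * motz_weight_from h.-1 s'
  end.

Definition rho (M : seq step) : {poly int} := motz_weight_from 0 M.

From mathcomp Require Import all_boot all_order all_algebra.
From mathcomp Require Import zify ring.
Set Implicit Arguments. Unset Strict Implicit. Unset Printing Implicit Defensive.
Import GRing.Theory.

(* Cut [2n] into the n blocks {2j-1, 2j}.  A signature meets
   each block in at most one point, so it is coded by a word of length n:
   block j gives an up step if the odd element 2j-1 is in S, a down step if
   the even element 2j is in S, and a level step otherwise.  The number of
   odd minus even elements of S among the first 2k integers is then the
   height of the word after k steps, so the prefix condition (iii) and the
   balance condition (i) say exactly that the word is a Motzkin path; the
   map is clearly injective, and surjective by reading a path backwards.
   For the weights, s(2j-1)s(2j) equals the weight of step j at height h: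
   (h+1)(h+2), (h+1)^2 or (h+1)h, and |S|/2 is the number of up steps. *)

Lemma big_pairs (R : Type) (idx : R) (op : Monoid.law idx) (G : nat -> R) k :
  \big[op/idx]_(0 <= m < k.*2) G m =
  \big[op/idx]_(0 <= j < k) op (G j.*2) (G j.*2.+1).
Proof.
elim: k => [|k IH]; first by rewrite !big_geq.
by rewrite doubleS !big_nat_recr //= IH Monoid.mulmA.
Qed.

Lemma sum_prefix (F : nat -> bool) i N : i <= N ->
  \sum_(0 <= m < N) ((m < i) && F m) = \sum_(0 <= m < i) F m.
Proof.
move=> iN; rewrite (@big_cat_nat _ _ _ i) //= [X in _ + X]big1_seq ?addn0.
  by apply: eq_big_nat => m /andP[_ ->].
by move=> m /andP[_]; rewrite mem_index_iota => /andP[im _]; rewrite ltnNge im.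
Qed.

Definition steps_before (x : step) (c : seq step) k :=
  \sum_(0 <= j < k) (nth Level c j == x).

Notation ups := (steps_before Up).
Notation downs := (steps_before Down).

Lemma steps_before0 x c : steps_before x c 0 = 0.
Proof. by rewrite /steps_before big_geq. Qed.

Lemma steps_before_cons x y s k :
  steps_before x (y :: s) k.+1 = (y == x) + steps_before x s k.
Proof. by rewrite /steps_before big_nat_recl. Qed.

Lemma steps_beforeS x c k :
  steps_before x c k.+1 = steps_before x c k + (nth Level c k == x).
Proof. by rewrite /steps_before big_nat_recr. Qed.

(* Beyond the end of the word the counts of non-level steps are constant
   (positions past the end read as level steps). *)
Lemma steps_before_oversize x c k : x != Level -> size c <= k ->
  steps_before x c k = steps_before x c (size c).
Proof.
move=> /negbTE xL hk; rewrite /steps_before (@big_cat_nat _ _ _ (size c)) //=.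
rewrite [X in _ + X]big1_seq ?addn0 // => j /andP[_].
by rewrite mem_index_iota => /andP[hj _]; rewrite nth_default // eq_sym xL.
Qed.

Lemma steps_before_nil x k : x != Level -> steps_before x [::] k = 0.
Proof. by move=> xL; rewrite steps_before_oversize // steps_before0. Qed.

Lemma motz_okP h c : motz_ok h c <->
  (forall k, downs c k <= h + ups c k) /\ downs c (size c) = h + ups c (size c).
Proof.
elim: c h => [|x s IH] h /=.
  rewrite !steps_before_nil; split=> [/eqP-> | [_ H]].
    by split=> // k; rewrite !steps_before_nil.
  by apply/eqP; lia.
have shift : (forall k, downs (x :: s) k <= h + ups (x :: s) k) <->
             (forall k, (x == Down) + downs s k <= h + ((x == Up) + ups s k)).
  split=> H k; first by have := H k.+1; rewrite !steps_before_cons.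
  by case: k => [|k]; [rewrite !steps_before0 | rewrite !steps_before_cons; exact: H].
rewrite shift !steps_before_cons {shift}.
case: x => /=; rewrite ?IH.
- by split=> -[H1 H2]; split=> [k|]; try (have := H1 k); lia.
- by split=> -[H1 H2]; split=> [k|]; try (have := H1 k); lia.
split=> [/andP[h0 /IH [H1 H2]] | [H1 H2]].
  by split=> [k|]; try (have := H1 k); lia.
have h0 : 0 < h by have := H1 0; rewrite !steps_before0; lia.
by rewrite h0 /=; apply/IH; split=> [k|]; try (have := H1 k); lia.
Qed.

Local Open Scope ring_scope.

Definition step_wt (h : int) (x : step) : int :=
  match x with
  | Up => (h + 1) * (h + 2)
  | Level => (h + 1) * (h + 1)
  | Down => (h + 1) * h
  end.

Definition next_height (h : nat) (x : step) : nat :=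
  match x with Up => h.+1 | Level => h | Down => h.-1 end.

Definition height (h : nat) (c : seq step) j : int :=
  h%:Z + (ups c j)%:Z - (downs c j)%:Z.

Lemma motz_ok_cons h x s : motz_ok h (x :: s) -> motz_ok (next_height h x) s.
Proof. by case: x => //= /andP[]. Qed.

Lemma height_cons h x s j : motz_ok h (x :: s) ->
  height h (x :: s) j.+1 = height (next_height h x) s j.
Proof.
rewrite /height !steps_before_cons.
case: x => /=; [lia | lia | by case: h => // h _; lia].
Qed.

Lemma motz_weight_cons h x s : motz_ok h (x :: s) ->
  motz_weight_from h (x :: s) =
  (step_wt h%:Z x)%:P * 'X^(x == Up) * motz_weight_from (next_height h x) s.
Proof.
case: x => /=.
- move=> _; rewrite expr1 -mul_polyC; congr (_%:P * _ * _).
  by rewrite /step_wt natz; lia.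
- by move=> _; rewrite expr0 mulr1 /step_wt natz; congr (_%:P * _); lia.
- case: h => [//|h] _; rewrite expr0 mulr1 /step_wt natz.
  by congr (_%:P * _); lia.
Qed.

Lemma motz_weightE h c : motz_ok h c ->
  motz_weight_from h c =
  (\prod_(0 <= j < size c) step_wt (height h c j) (nth Level c j))%:P
    * 'X^(ups c (size c)).
Proof.
elim: c h => [|x s IH] h ok.
  by rewrite /= big_geq // steps_before_nil // expr0 mulr1.
rewrite motz_weight_cons // IH ?(motz_ok_cons ok) //.
change (size (x :: s)) with (size s).+1.
rewrite big_nat_recl // steps_before_cons polyCM exprD.
under eq_bigr => j _ do rewrite -(height_cons j ok).
by rewrite /height !steps_before0 subr0 addr0; ring.
Qed.

Local Close Scope ring_scope.

Section Signatures.
Variable n : nat.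
Implicit Types S : {set 'I_(2 * n)}.

Definition memS S (m : nat) : bool := inS S m.+1.

Lemma memS_ord S (i : 'I_(2 * n)) : memS S i = (i \in S).
Proof.
apply/existsP/idP => [[j /andP[jS /eqP ij]]|iS]; last by exists i; rewrite iS eqxx.
by have -> : i = j by apply: val_inj; case: ij.
Qed.

Lemma memS_out S m : 2 * n <= m -> memS S m = false.
Proof. by move=> hm; apply/existsP => -[j /andP[_ /eqP ij]]; have := ltn_ord j; lia. Qed.

Lemma card_sub_memS S (Q : nat -> bool) :
  #|[set m in S | Q m]| = \sum_(0 <= m < 2 * n) (memS S m && Q m).
Proof.
rewrite -sum1_card big_mkcond /= big_mkord.
by apply: eq_bigr => i _; rewrite inE memS_ord; case: (_ && _).
Qed.

Lemma card_memS S : #|S| = \sum_(0 <= m < 2 * n) memS S m.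
Proof.
rewrite -sum1_card big_mkcond /= big_mkord.
by apply: eq_bigr => i _; rewrite memS_ord; case: (_ \in _).
Qed.

Lemma card_sub_below S (i : nat) (Q : nat -> bool) : i <= 2 * n ->
  #|[set m in S | (m < i) && Q m]| = \sum_(0 <= m < i) (memS S m && Q m).
Proof.
move=> hi; rewrite (card_sub_memS S (fun m => (m < i) && Q m)) -(sum_prefix _ hi).
by apply: eq_bigr => m _; rewrite andbCA.
Qed.

Definition odds S i := \sum_(0 <= m < i) (memS S m && odd m.+1).
Definition evens S i := \sum_(0 <= m < i) (memS S m && ~~ odd m.+1).

Lemma sig_f_odds S (i : 'I_(2 * n)) : sig_f S i = odds S i.
Proof. exact: (card_sub_below S (fun m => odd m.+1) (ltnW (ltn_ord i))). Qed.
Lemma sig_g_evens S (i : 'I_(2 * n)) : sig_g S i = evens S i.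
Proof. exact: (card_sub_below S (fun m => ~~ odd m.+1) (ltnW (ltn_ord i))). Qed.

Lemma card_sub_upto S (i : 'I_(2 * n)) (Q : nat -> bool) :
  #|[set m in S | (m <= i) && Q m]| = \sum_(0 <= m < i.+1) (memS S m && Q m).
Proof. by rewrite -(card_sub_below S Q (ltn_ord i)). Qed.

(* The step coding block j = {2j+1, 2j+2} of S, and the word of all blocks. *)
Definition block_step S j : step :=
  if memS S j.*2 then Up else if memS S j.*2.+1 then Down else Level.

Definition to_motzkin S : seq step := mkseq (block_step S) n.

Lemma size_to_motzkin S : size (to_motzkin S) = n.
Proof. by rewrite size_mkseq. Qed.

Lemma nth_to_motzkin S j : nth Level (to_motzkin S) j = block_step S j.
Proof.
case: (ltnP j n) => hj; first by rewrite nth_mkseq.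
by rewrite nth_default ?size_mkseq // /block_step !memS_out //; lia.
Qed.

Definition block_free S := forall j, ~~ (memS S j.*2 && memS S j.*2.+1).

Lemma signature_block_free S : is_signature S -> block_free S.
Proof.
case/and3P => _ /forallP H _ j; case: (ltnP j n) => hj.
  exact: (H (Ordinal hj)).
by rewrite memS_out //; lia.
Qed.

Lemma memS_odd_block S j : memS S j.*2 = (block_step S j == Up).
Proof. by rewrite /block_step; case: (memS S j.*2) => //; case: (memS S j.*2.+1). Qed.

Lemma memS_even_block S j : block_free S -> memS S j.*2.+1 = (block_step S j == Down).
Proof.
move=> /(_ j); rewrite /block_step; case: (memS S j.*2) => /=; first by move/negbTE->.
by case: (memS S j.*2.+1).
Qed.

Lemma odds_blocks S k : odds S k.*2 = ups (to_motzkin S) k.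
Proof.
rewrite /odds big_pairs /steps_before; apply: eq_bigr => j _.
by rewrite nth_to_motzkin /= odd_double /= andbT andbF addn0 memS_odd_block.
Qed.

Lemma evens_blocks S k : block_free S -> evens S k.*2 = downs (to_motzkin S) k.
Proof.
move=> bS; rewrite /evens big_pairs /steps_before; apply: eq_bigr => j _.
by rewrite nth_to_motzkin /= odd_double /= andbF andbT add0n memS_even_block.
Qed.

Lemma odds_half_block S k : odds S k.*2.+1 = ups (to_motzkin S) k.+1.
Proof.
rewrite /odds big_nat_recr //= -/(odds S k.*2) odds_blocks steps_beforeS.
by rewrite odd_double andbT nth_to_motzkin memS_odd_block.
Qed.

Lemma evens_half_block S k : block_free S -> evens S k.*2.+1 = downs (to_motzkin S) k.
Proof.
move=> bS; rewrite /evens big_nat_recr //= -/(evens S k.*2) evens_blocks //.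
by rewrite odd_double andbF addn0.
Qed.

Lemma signature_motzkin S : block_free S ->
  is_signature S <-> motz_ok 0 (to_motzkin S).
Proof.
move=> bS; rewrite motz_okP size_to_motzkin.
have Eodd : #|[set i in S | odd i.+1]| = ups (to_motzkin S) n.
  by rewrite (card_sub_memS S (fun m => odd m.+1)) mul2n -odds_blocks.
have Eeven : #|[set i in S | ~~ odd i.+1]| = downs (to_motzkin S) n.
  by rewrite (card_sub_memS S (fun m => ~~ odd m.+1)) mul2n -evens_blocks.
have Eprefix (i : 'I_(2 * n)) :
    (#|[set m in S | (m <= i) && ~~ odd m.+1]| <= #|[set m in S | (m <= i) && odd m.+1]|)
    = (evens S i.+1 <= odds S i.+1).
  by rewrite (card_sub_upto S i (fun m => ~~ odd m.+1)) (card_sub_upto S i (fun m => odd m.+1)).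
rewrite /is_signature Eodd Eeven; split.
  case/and3P => /eqP Hbal _ /forallP Hpre; split => [k|]; last by rewrite Hbal.
  case: (ltnP n k) => hk.
    by rewrite !steps_before_oversize ?size_to_motzkin ?(ltnW hk) // Hbal.
  case: k hk => [|k] hk; first by rewrite !steps_before0.
  have hi : k.*2.+1 < 2 * n by lia.
  by have := Hpre (Ordinal hi); rewrite Eprefix -doubleS odds_blocks evens_blocks.
case=> Hpre Hbal; apply/and3P; split; first by rewrite Hbal.
  by apply/forallP => j; exact: bS.
apply/forallP => i; rewrite Eprefix.
have := odd_double_half i.+1; case: (odd i.+1) => /= <-.
  rewrite add1n odds_half_block evens_half_block // steps_beforeS.
  exact: leq_trans (Hpre _) (leq_addr _ _).
by rewrite add0n odds_blocks evens_blocks.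
Qed.

Local Open Scope ring_scope.

(* The vector s(i), written for the position m of the integer i = m+1. *)
Definition svec S (m : nat) : int :=
  if memS S m && ~~ odd m.+1 then (odds S m)%:Z - (evens S m)%:Z
  else (odds S m)%:Z - (evens S m)%:Z + 1.

Lemma prod_sig_vec S : \prod_(i < 2 * n) sig_vec S i = \prod_(0 <= m < 2 * n) svec S m.
Proof.
rewrite big_mkord; apply: eq_bigr => i _.
by rewrite /sig_vec /svec sig_f_odds sig_g_evens memS_ord.
Qed.

Lemma svec_block S j : block_free S ->
  svec S j.*2 * svec S j.*2.+1 = step_wt (height 0 (to_motzkin S) j) (block_step S j).
Proof.
move=> bS; rewrite /svec /= odd_double /= andbF andbT /height.
rewrite odds_blocks evens_blocks // odds_half_block evens_half_block // steps_beforeS.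
rewrite nth_to_motzkin memS_even_block //.
by case: (block_step S j) => /=; rewrite /step_wt; lia.
Qed.

(* |S|/2 is the number of up steps, since S has as many odd as even elements. *)
Lemma half_card_signature S : is_signature S ->
  (#|S| %/ 2)%N = ups (to_motzkin S) n.
Proof.
move=> sS; have bS := signature_block_free sS.
case/and3P: sS => /eqP Hbal _ _.
have -> : #|S| = (ups (to_motzkin S) n + downs (to_motzkin S) n)%N.
  rewrite card_memS mul2n big_pairs /steps_before -big_split /=.
  by apply: eq_bigr => j _; rewrite nth_to_motzkin memS_odd_block memS_even_block.
move: Hbal.
rewrite (card_sub_memS S (fun m => odd m.+1)) (card_sub_memS S (fun m => ~~ odd m.+1)).
by rewrite mul2n -/(odds S n.*2) -/(evens S n.*2) odds_blocks evens_blocks //; lia.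
Qed.

Lemma sig_weight_rho S : is_signature S -> sig_weight S = rho (to_motzkin S).
Proof.
move=> sS; have bS := signature_block_free sS.
have ok : motz_ok 0 (to_motzkin S) by rewrite -signature_motzkin.
rewrite /rho (motz_weightE ok) size_to_motzkin /sig_weight prod_sig_vec.
have := big_pairs (@GRing.mul int) (svec S) n; rewrite -mul2n => ->.
rewrite half_card_signature //; congr (_%:P * _).
by apply: eq_bigr => j _ /=; rewrite svec_block // nth_to_motzkin.
Qed.

Local Close Scope ring_scope.

(* Inverse map: block j contributes its odd element for an up step and its
   even element for a down step. *)
Definition of_motzkin (M : seq step) : {set 'I_(2 * n)} :=
  [set i : 'I_(2 * n) | nth Level M i./2 == (if odd i then Down else Up)].

Lemma memS_of_motzkin M j (b : bool) : j < n ->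
  memS (of_motzkin M) (b + j.*2) = (nth Level M j == if b then Down else Up).
Proof.
move=> hj; have hm : b + j.*2 < 2 * n by case: b => /=; lia.
rewrite (memS_ord _ (Ordinal hm)) inE half_bit_double /= oddD odd_double addbF.
by case: b {hm}.
Qed.

Lemma block_step_of_motzkin M j : size M = n ->
  block_step (of_motzkin M) j = nth Level M j.
Proof.
move=> sM; case: (ltnP j n) => hj; last first.
  by rewrite /block_step !memS_out ?nth_default ?sM //; lia.
have := memS_of_motzkin M false hj; have := memS_of_motzkin M true hj.
rewrite add0n add1n /block_step => -> ->.
by case: (nth Level M j).
Qed.

Lemma of_motzkin_block_free M : block_free (of_motzkin M).
Proof.
move=> j; case: (ltnP j n) => hj; last by rewrite memS_out //; lia.
have := memS_of_motzkin M false hj; have := memS_of_motzkin M true hj.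
rewrite add0n add1n => -> ->.
by case: (nth Level M j).
Qed.

Lemma to_motzkin_of_motzkin M : size M = n -> to_motzkin (of_motzkin M) = M.
Proof.
move=> sM; apply: (@eq_from_nth _ Level); first by rewrite size_to_motzkin.
by move=> i _; rewrite nth_to_motzkin block_step_of_motzkin.
Qed.

Lemma to_motzkin_inj S1 S2 : block_free S1 -> block_free S2 ->
  to_motzkin S1 = to_motzkin S2 -> S1 = S2.
Proof.
move=> b1 b2 E; apply/setP => i; rewrite -!memS_ord.
have := odd_double_half i; case: (odd i) => <-.
  by rewrite add1n !memS_even_block // -!nth_to_motzkin E.
by rewrite add0n !memS_odd_block -!nth_to_motzkin E.
Qed.

End Signatures.

Theorem mainTheorem4 (n : nat) (hn : 1 <= n) :
  exists phi : {set 'I_(2 * n)} -> seq step,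
    [/\ forall S, is_signature S -> is_motzkin n (phi S),
        {in is_signature (n:=n) &, injective phi},
        forall M, is_motzkin n M -> exists2 S, is_signature S & phi S = M &
        forall S, is_signature S -> sig_weight S = rho (phi S)].
Proof.
exists (@to_motzkin n); split.
- move=> S sS; rewrite /is_motzkin size_to_motzkin eqxx /=.
  exact/(signature_motzkin (signature_block_free sS)).
- move=> S1 S2 s1 s2; exact: to_motzkin_inj (signature_block_free s1) (signature_block_free s2).
- move=> M /andP[/eqP sM okM]; exists (of_motzkin n M); last exact: to_motzkin_of_motzkin.
  by rewrite (signature_motzkin (of_motzkin_block_free n M)) (to_motzkin_of_motzkin sM).
- exact: sig_weight_rho.
Qed.
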